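(* Let $m,n$ be positive integers. The simplicial rook graph $\mathcal{SR}(m,n)$ is Hamiltonian, except in the cases $m=1$ and $(m,n)=(2,1)$.
   Context: For positive integers $m,n$, the simplicial rook graph $\mathcal{SR}(m,n)$ is the graph whose vertices are the vectors $(a_1,\dots,a_m)\in\mathbb{N}^m$ (nonnegative integer coordinates) with $a_1+\cdots+a_m=n$, two vertices being adjacent if and only if their vectors differ in exactly two coordinates. A graph is Hamiltonian if it has a cycle passing through every vertex exactly once. *)

From mathcomp Require Import all_boot.
Set Implicit Arguments. Unset Strict Implicit. Unset Printing Implicit Defensive.

(* Vertices of SR(m,n): vectors (a_1..a_m) of nonnegative integers with sum n.
   Each coordinate is at most n, so we store it in 'I_n.+1; the coercion to
   nat recovers the integer value. *)
Definition SRvert (m n : nat) :=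
  {f : {ffun 'I_m -> 'I_n.+1} | \sum_(i < m) (f i : nat) == n}.

Definition SRadj (m n : nat) : rel (SRvert m n) :=
  fun u v => #|[set i : 'I_m | val u i != val v i]| == 2.

Definition hamiltonian (T : finType) (e : rel T) : Prop :=
  exists s : seq T, [/\ uniq s, size s = #|T|, 3 <= size s & cycle e s].

From mathcomp Require Import all_boot zify.
Set Implicit Arguments. Unset Strict Implicit. Unset Printing Implicit Defensive.

(* Identify a vertex with its coordinate sequence.  The lattice points of the
   dilated simplex N.Δ_m (sequences of length m+1 summing to N) can be listed
   as a "snake": by increasing first coordinate k, and within the block of a
   given k by the snake of N.Δ_(m-1) for N - k, reversed when k is odd.
   Consecutive entries differ in exactly two coordinates, the list runs from
   N.e_m to N.e_0, and these two corners are themselves adjacent; hence the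
   snake closes up into a Hamiltonian cycle as soon as it has three vertices.
   SR(1, n) has a single vertex and SR(2, 1) only two. *)

Section Walks.

Variables (T : Type) (e : rel T).

Definition walk (s : seq T) (x y : T) :=
  exists r, [/\ s = x :: r, path e x r & last x r = y].

Lemma walk_cat s t x y z w :
  walk s x y -> walk t z w -> e y z -> walk (s ++ t) x w.
Proof.
case=> r [-> p_r <-] [r' [-> p_r' <-]] e_yz; exists (r ++ z :: r'); split => //.
- by rewrite cat_path p_r /= e_yz.
- by rewrite last_cat.
Qed.

Lemma walk_rev s x y : symmetric e -> walk s x y -> walk (rev s) y x.
Proof.
move=> e_sym [r [-> p_r <-]]; exists (rev (belast x r)); split.
- by rewrite lastI rev_rcons.
- by rewrite rev_path (eq_path (e' := e)) // => u v; rewrite e_sym.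
- by case: r {p_r} => //= z r; rewrite rev_cons last_rcons.
Qed.

Lemma walk_cycle s x y : walk s x y -> e y x -> cycle e s.
Proof. by case=> r [-> p_r <-] e_yx; rewrite /= rcons_path p_r. Qed.

Lemma walk_flatten_iota (A : nat -> seq T) (a b : nat -> T) k j :
    (forall i, walk (A i) (a i) (b i)) ->
    (forall i, k <= i < k + j -> e (b i) (a i.+1)) ->
  walk (flatten [seq A i | i <- iota k j.+1]) (a k) (b (k + j)).
Proof.
move=> walk_A e_ba; elim: j k e_ba => [|j IH] k e_ba.
  by rewrite /= cats0 addn0; apply: walk_A.
apply: walk_cat (walk_A k) _ _; last by apply: e_ba; rewrite leqnn addnS ltnS leq_addr.
rewrite -addSnnS; apply: IH => i /andP [lt_ki lt_ij]; apply: e_ba.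
by rewrite ltnW //= -addSnnS.
Qed.

End Walks.

Lemma walk_map (T U : Type) (e : rel T) (e' : rel U) (f : T -> U) s x y :
  {homo f : u v / e u v >-> e' u v} -> walk e s x y -> walk e' (map f s) (f x) (f y).
Proof.
move=> f_homo [r [-> p_r <-]]; exists (map f r); split => //.
- by rewrite path_map (sub_path _ p_r).
- by rewrite last_map.
Qed.

Definition hamming (T : eqType) (u v : seq T) := count (fun p => p.1 != p.2) (zip u v).

Lemma hamming_cons (T : eqType) (a b : T) u v :
  hamming (a :: u) (b :: v) = (a != b) + hamming u v.
Proof. by []. Qed.

Lemma hamming_sym (T : eqType) (u v : seq T) : hamming u v = hamming v u.
Proof. by elim: u v => [|a u IH] [|b v] //; rewrite !hamming_cons IH eq_sym. Qed.

Lemma hamming_refl (T : eqType) (u : seq T) : hamming u u = 0.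
Proof. by elim: u => // a u IH; rewrite hamming_cons IH eqxx. Qed.

Lemma hamming_set_nth (T : eqType) (x0 x y : T) s j : j < size s ->
  hamming (set_nth x0 s j x) (set_nth x0 s j y) = (x != y).
Proof.
elim: s j => [//|a s IH] [|j] /= lt_js; rewrite hamming_cons.
- by rewrite hamming_refl addn0.
- by rewrite eqxx IH.
Qed.

Definition rook_adj (u v : seq nat) := hamming u v == 2.

Lemma rook_adj_sym : symmetric rook_adj.
Proof. by move=> u v; rewrite /rook_adj hamming_sym. Qed.

Definition corner (m j x : nat) := set_nth 0 (nseq m.+1 0) j x.

Lemma corner0 m j : j <= m -> corner m j 0 = nseq m.+1 0.
Proof. by elim: m j => [|m IH] [|j] //= le_jm; congr cons; apply: IH. Qed.

Lemma hamming_corner m j x y : j <= m -> hamming (corner m j x) (corner m j y) = (x != y).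
Proof. by move=> le_jm; rewrite hamming_set_nth // size_nseq. Qed.

Fixpoint snake (m N : nat) : seq (seq nat) :=
  if m is m'.+1 then
    [seq k :: x | k <- iota 0 N.+1,
                  x <- if odd k then rev (snake m' (N - k)) else snake m' (N - k)]
  else [:: [:: N]].

Lemma snakeS m N : snake m.+1 N =
  [seq k :: x | k <- iota 0 N.+1,
                x <- if odd k then rev (snake m (N - k)) else snake m (N - k)].
Proof. by []. Qed.

Definition composition (m N : nat) (x : seq nat) := (size x == m) && (sumn x == N).

Lemma mem_snake m N x : (x \in snake m N) = composition m.+1 N x.
Proof.
rewrite /composition; elim: m N x => [|m IH] N x.
  by case: x => [|a [|b x]] //=; rewrite inE ?eqseq_cons ?andbT ?addn0 // andbF.
rewrite snakeS; apply/allpairsPdep/idP => [[k [y [k_iota y_snake ->]]] | ].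
  move: k_iota y_snake; rewrite mem_iota (fun_if (fun s => y \in s)) mem_rev if_same IH.
  by rewrite /= => k_le /andP [/eqP size_y /eqP sum_y]; rewrite size_y sum_y; lia.
case: x => // k y /andP [/eqP [size_y] /eqP sum_y]; rewrite /= in sum_y.
exists k, y; split; last by [].
- by rewrite mem_iota; lia.
- by rewrite (fun_if (fun s => y \in s)) mem_rev if_same IH size_y /=; apply/eqP; lia.
Qed.

Lemma uniq_snake m N : uniq (snake m N).
Proof.
elim: m N => [//|m IH] N; apply: allpairs_uniq_dep => [|k _|].
- exact: iota_uniq.
- by case: odd; rewrite ?rev_uniq IH.
- by move=> [k y] [k' y'] _ _ /= [-> ->].
Qed.

Lemma walk_snake m N : walk rook_adj (snake m N) (corner m m N) (corner m 0 N).
Proof.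
elim: m N => [|m IH] N; first by exists [::].
(* Block [k] runs from corner [side k] to corner [side k.+1] of its face, so
   consecutive blocks meet at corners with the same index. *)
pose side k := if odd k then 0 else m.
pose a k := k :: corner m (side k) (N - k).
pose b k := k :: corner m (side k.+1) (N - k).
have -> : corner m.+1 m.+1 N = a 0 by rewrite /a /side /= subn0.
have -> : corner m.+1 0 N = b N by rewrite /b /side subnn corner0 //; case: odd.
rewrite snakeS; apply: walk_flatten_iota => [k | k /andP [_ lt_kN]].
- apply: (walk_map (e := rook_adj) (f := cons k)) => [u v uv|].
    by rewrite /rook_adj hamming_cons eqxx add0n.
  rewrite /a /b /side /=; case: odd; last exact: IH.
  by apply: walk_rev; [exact: rook_adj_sym | exact: IH].
- rewrite /rook_adj hamming_cons hamming_corner; last by rewrite /side; case: odd.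
  by apply/eqP; lia.
Qed.

Lemma rook_adj_corners m N : 0 < N -> rook_adj (corner m.+1 0 N) (corner m.+1 m.+1 N).
Proof.
move=> N_gt0; have -> : corner m.+1 0 N = N :: corner m m 0 by rewrite corner0.
by rewrite /rook_adj hamming_cons hamming_corner //; case: N N_gt0.
Qed.

Lemma nth_leq_sumn (s : seq nat) i : nth 0 s i <= sumn s.
Proof. by elim: s i => [|a s IH] [|i] //=; rewrite ?leq_addr // (leq_trans (IH i)) ?leq_addl. Qed.

Lemma sumn_map_enum_ord m (F : 'I_m -> nat) : sumn [seq F i | i <- enum 'I_m] = \sum_(i < m) F i.
Proof. by rewrite sumnE big_map big_enum. Qed.

Lemma map_nth_enum_ord m (x : seq nat) : size x = m -> [seq nth 0 x i | i : 'I_m <- enum 'I_m] = x.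
Proof. by move=> <-; rewrite (map_comp (nth 0 x) val) val_enum_ord -/(mkseq _ _) mkseq_nth. Qed.

Section Coordinates.

Variables m n : nat.

Definition coords (v : SRvert m n) : seq nat := [seq (val v i : nat) | i <- enum 'I_m].

Lemma composition_coords v : composition m n (coords v).
Proof. by rewrite /composition size_map size_enum_ord sumn_map_enum_ord eqxx; case: v. Qed.

Lemma coords_inj : injective coords.
Proof.
move=> u v /eq_in_map eq_uv; apply/val_inj/ffunP => i; apply/val_inj.
by apply: eq_uv; rewrite mem_enum.
Qed.

Lemma coords_onto x : composition m n x -> exists v, coords v = x.
Proof.
case/andP=> /eqP size_x /eqP sum_x.
pose f : {ffun 'I_m -> 'I_n.+1} := [ffun i : 'I_m => inord (nth 0 x i)].
have fE i : f i = nth 0 x i :> nat by rewrite ffunE inordK // ltnS -sum_x nth_leq_sumn.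
have coords_f : [seq (f i : nat) | i <- enum 'I_m] = x by rewrite (eq_map fE) map_nth_enum_ord.
have sum_f : \sum_(i < m) (f i : nat) == n by rewrite -sumn_map_enum_ord coords_f sum_x.
by exists (Sub f sum_f).
Qed.

Lemma lift_coords (L : seq (seq nat)) :
  all (composition m n) L -> exists s, map coords s = L.
Proof.
elim: L => [|x L IH] /=; first by exists [::].
by case/andP=> /coords_onto [v <-] /IH [s <-]; exists (v :: s).
Qed.

Lemma SRadjE u v : SRadj u v = rook_adj (coords u) (coords v).
Proof.
rewrite /SRadj /rook_adj /hamming zip_map count_map -sum1dep_card -sum1_count.
by rewrite big_enum_cond.
Qed.

End Coordinates.

Arguments coords {m n} v.

Lemma hamiltonian_card (T : finType) (e : rel T) : hamiltonian e -> 2 < #|T|.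
Proof. by case=> s [_ <-]. Qed.

Lemma lift_snake m n : exists s : seq (SRvert m.+1 n), map coords s = snake m n.
Proof. by apply: lift_coords; apply/allP => x; rewrite mem_snake. Qed.

Lemma card_SRvert m n : #|{: SRvert m.+1 n}| = size (snake m n).
Proof.
have [s s_snake] := lift_snake m n.
have uniq_s : uniq s by rewrite -(map_inj_uniq (@coords_inj _ _)) s_snake uniq_snake.
have mem_s v : v \in s by rewrite -(mem_map (@coords_inj _ _)) s_snake mem_snake composition_coords.
by rewrite -s_snake size_map -(card_uniqP uniq_s); apply: eq_card => v; rewrite mem_s.
Qed.

Lemma SRadj_hamiltonian m n : 0 < n -> 2 < size (snake m.+1 n) -> hamiltonian (@SRadj m.+2 n).
Proof.
move=> n_gt0 snake_big; have [s s_snake] := lift_snake m.+1 n.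
exists s; split.
- by rewrite -(map_inj_uniq (@coords_inj _ _)) s_snake uniq_snake.
- by rewrite card_SRvert -s_snake size_map.
- by rewrite -(size_map coords) s_snake.
- rewrite (eq_cycle (@SRadjE _ _)) -cycle_map s_snake.
  exact: walk_cycle (walk_snake _ _) (rook_adj_corners _ n_gt0).
Qed.

Lemma size_snake_gt2 m n : 0 < n -> ~ (m = 0 /\ n = 1) -> 2 < size (snake m.+1 n).
Proof.
move=> n_gt0 not_21.
suff [x [y [z [uniq_xyz comp_xyz]]]] : exists x y z,
    uniq [:: x; y; z] /\ all (composition m.+2 n) [:: x; y; z].
  apply: (uniq_leq_size uniq_xyz) => w /(allP comp_xyz); by rewrite mem_snake.
case: m not_21 => [|m] not_21.
  case: n n_gt0 not_21 => [|[|n]] // _ not_21; first by exfalso; apply: not_21.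
  exists [:: n.+2; 0], [:: 0; n.+2], [:: 1; n.+1].
  by rewrite /composition /= !addn0 add0n add1n eqxx.
case: n n_gt0 not_21 => [|n] // _ _.
exists [:: n.+1, 0, 0 & nseq m 0], [:: 0, n.+1, 0 & nseq m 0], [:: 0, 0, n.+1 & nseq m 0].
by rewrite /composition /= size_nseq sumn_nseq mul0n !addn0 !add0n !eqxx.
Qed.

Theorem theorem3 (m n : nat) (hm : 0 < m) (hn : 0 < n) :
  hamiltonian (@SRadj m n) <-> ~ (m = 1 \/ (m = 2 /\ n = 1)).
Proof.
case: m hm => [//|[|m]] _.
  split=> [/hamiltonian_card | not_small]; last by case: not_small; left.
  by rewrite card_SRvert.
split=> [/hamiltonian_card + [//|[m0 n1]] | not_small].
  by rewrite card_SRvert; case: m m0 => // _; rewrite n1.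
apply: (SRadj_hamiltonian hn); apply: (size_snake_gt2 hn) => -[m0 n1].
by apply: not_small; right; rewrite m0 n1.
Qed.
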